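(* In the protocol IT-HS described in the context, with $f<\frac{n}{3}$ Byzantine parties, if two nonfaulty parties send the messages $\langle key1,val,v\rangle$ and $\langle key1,val',v\rangle$ (for the same view $v$), then $val=val'$.
   Context: Model. $n$ parties with inputs $x_i$; up to $f$ Byzantine (arbitrary behaviour), the rest nonfaulty; authenticated point-to-point channels; partial synchrony: after an unknown time GST every message arrives within known $\Delta$ time and clocks are synchronized, before GST delays are arbitrary but finite. Protocol IT-HS (party $i$). Variables: $lock\gets 0$, $lock\_val\gets x_i$; $key3\gets 0$, $key3\_val\gets x_i$; $key2\gets 0$, $key2\_val\gets x_i$, $prev\_key2\gets -1$; $key1\gets 0$, $key1\_val\gets x_i$, $prev\_key1\gets -1$; $view\gets 0$; $highest\_request[j]\gets 0$, $highest\_abort[j]\gets 0$ for $j\in[n]$. ''Send-upon-join $m$'': for each $j$, send $m$ to $j$ as soon as $highest\_request[j]$ equals the current view. Background: (B1) on $\langle request,v\rangle$ from $j$, $highest\_request[j]\gets\max(highest\_request[j],v)$. (B2) on $\langle done,val\rangle$ from $f+1$ parties with the same $val$: if no $done$ sent yet, send $\langle done,val\rangle$ to all. (B3) on $\langle done,val\rangle$ from $n-f$ parties with the same $val$: decide $val$, terminate. (B4) on $\langle abort,v\rangle$ from $j$ with $highest\_abort[j]<v$: $highest\_abort[j]\gets v$; $u\gets$ the $(f+1)$-th largest entry of $highest\_abort$; if $u>highest\_abort[i]$ send $\langle abort,u\rangle$ to all and set $highest\_abort[i]\gets u$; $w\gets$ the $(n-f)$-th largest entry; if $w\ge view$ set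 $view\gets w+1$. Views: for each value $v$ of $view$, while $view=v$: fresh per-view state; after $11\Delta$ local time send $\langle abort,v\rangle$ to all; ignore other views' messages except $abort$, $done$, $request$; primary $p=(v\bmod n)+1$. View change: send $\langle request,v\rangle$ to all; when $highest\_request[p]=v$ send $\langle suggest,key3,key3\_val,key2,key2\_val,prev\_key2,v\rangle$ to $p$; send-upon-join $\langle proof,key1,key1\_val,prev\_key1,v\rangle$. If $i=p$: upon first $\langle suggest,k3,v3,k2,v2,pk2,v\rangle$ from a party, if $pk2<k2<v$ add $(k2,v2,pk2)$ to $key2\_proofs$; if $k3=0$ add $(k3,v3)$ to $suggestions$; else if $k3<v$ add $(k3,v3)$ as soon as at least $f+1$ triples $(k,w,pk)\in key2\_proofs$ satisfy $k3\le pk$ or ($k3\le k$ and $w=v3$); once $|suggestions|\ge n-f$, send-upon-join $\langle propose,k,w,v\rangle$ for $(k,w)\in suggestions$ with maximal $k$. Message processing: upon first $\langle proof,k1,v1,pk1,v\rangle$ from a party, if $v>k1>pk1$ add $(k1,v1,pk1)$ to $proofs$. Upon first $\langle propose,key,val,v\rangle$ from $p$: if $lock=0$ or $val=lock\_val$, send-upon-join $\langle echo,val,v\rangle$; else if $v>key\ge lock$, then once at least $f+1$ triples $(k,w,pk)\in proofs$ satisfy $lock\le pk$ or ($lock\le k$ and $w\ne lock\_val$), send-upon-join $\langle echo,val,v\rangle$. Upon $\langle echo,val,v\rangle$ from $n-f$ parties with the same $val$: send-upon-join $\langle key1,val,v\rangle$; if $key1\_val\ne val$ then $prev\_key1\gets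 key1$, $key1\_val\gets val$; $key1\gets v$. Upon $\langle key1,val,v\rangle$ from $n-f$ parties (same $val$): send-upon-join $\langle key2,val,v\rangle$; if $key2\_val\ne val$ then $prev\_key2\gets key2$, $key2\_val\gets val$; $key2\gets v$. Upon $\langle key2,val,v\rangle$ from $n-f$ (same $val$): send-upon-join $\langle key3,val,v\rangle$; $key3\gets v$, $key3\_val\gets val$. Upon $\langle key3,val,v\rangle$ from $n-f$ (same $val$): send-upon-join $\langle lock,val,v\rangle$; $lock\gets v$, $lock\_val\gets val$. Upon $\langle lock,val,v\rangle$ from $n-f$ (same $val$): if no $done$ sent yet, send $\langle done,val\rangle$ to all. *)

From HB Require Import structures.
From mathcomp Require Import all_boot all_order all_algebra.
From Stdlib Require List.

Set Implicit Arguments.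
Unset Strict Implicit.
Unset Printing Implicit Defensive.

Import Order.TTheory GRing.Theory Num.Theory.

Section ITHS.

Variables (n f : nat) (V : eqType).

(* Protocol messages.  Keys are views (nat); "prev" keys may be -1 (int). *)
Inductive msg : Type :=
| MRequest of nat
| MAbort of nat
| MDone of V
| MSuggest of nat & V & nat & V & int & nat         (* <suggest,k3,v3,k2,v2,pk2,v> *)
| MProof of nat & V & int & nat                     (* <proof,k1,v1,pk1,v> *)
| MPropose of nat & V & nat                         (* <propose,key,val,v> *)
| MEcho of V & nat
| MKey1 of V & nat
| MKey2 of V & nat
| MKey3 of V & nat
| MLock of V & nat.

(* (source, destination, message); channels are authenticated. *)
Definition packet : Type := ('I_n * 'I_n * msg)%type.

Record keys := Keys {
  lock : nat; lock_val : V;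
  key3 : nat; key3_val : V;
  key2 : nat; key2_val : V; prev_key2 : int;
  key1 : nat; key1_val : V; prev_key1 : int }.

Record vstate := VState {
  vs_sugg_sent : bool;
  vs_timer : bool;                     (* the 11Delta timer abort already sent *)
  vs_sugg_from : seq 'I_n;             (* primary: parties whose first suggest was processed *)
  vs_key2_proofs : seq (nat * V * int);
  vs_suggestions : seq (nat * V);
  vs_pending : seq (nat * V);          (* suggestions with 0 < k3 < v awaiting their condition *)
  vs_proposed : bool;
  vs_proof_from : seq 'I_n;            (* parties whose first proof was processed *)
  vs_proofs : seq (nat * V * int);
  vs_prop_got : bool;                  (* first propose from the primary processed *)
  vs_echo_wait : option V;             (* conditional echo awaiting f+1 proofs *)
  vs_rcv : seq ('I_n * msg);           (* received echo/key1/key2/key3/lock msgs of this view *)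
  vs_fired : seq (nat * V);            (* (phase,val) quorum handlers already executed *)
  vs_outbox : seq msg;                 (* messages to "send-upon-join" *)
  vs_served : seq ('I_n * nat) }.      (* (j,t): outbox entry t already sent to j *)

Record pstate := PState {
  ks : keys;
  view : nat;
  hreq : 'I_n -> nat;
  habort : 'I_n -> nat;
  done_sent : bool;
  rcv_done : seq ('I_n * V);
  decided : option V;                  (* Some val: decided val and terminated *)
  vs : vstate }.

Definition vs_with_sugg_sent (w : vstate) b :=
  VState b (vs_timer w) (vs_sugg_from w) (vs_key2_proofs w) (vs_suggestions w)
    (vs_pending w) (vs_proposed w) (vs_proof_from w) (vs_proofs w) (vs_prop_got w)
    (vs_echo_wait w) (vs_rcv w) (vs_fired w) (vs_outbox w) (vs_served w).
Definition vs_with_timer (w : vstate) b :=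
  VState (vs_sugg_sent w) b (vs_sugg_from w) (vs_key2_proofs w) (vs_suggestions w)
    (vs_pending w) (vs_proposed w) (vs_proof_from w) (vs_proofs w) (vs_prop_got w)
    (vs_echo_wait w) (vs_rcv w) (vs_fired w) (vs_outbox w) (vs_served w).
Definition vs_with_sugg (w : vstate) from kp sg pd :=
  VState (vs_sugg_sent w) (vs_timer w) from kp sg
    pd (vs_proposed w) (vs_proof_from w) (vs_proofs w) (vs_prop_got w)
    (vs_echo_wait w) (vs_rcv w) (vs_fired w) (vs_outbox w) (vs_served w).
Definition vs_with_proposed (w : vstate) b out :=
  VState (vs_sugg_sent w) (vs_timer w) (vs_sugg_from w) (vs_key2_proofs w) (vs_suggestions w)
    (vs_pending w) b (vs_proof_from w) (vs_proofs w) (vs_prop_got w)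
    (vs_echo_wait w) (vs_rcv w) (vs_fired w) out (vs_served w).
Definition vs_with_proofs (w : vstate) from pr :=
  VState (vs_sugg_sent w) (vs_timer w) (vs_sugg_from w) (vs_key2_proofs w) (vs_suggestions w)
    (vs_pending w) (vs_proposed w) from pr (vs_prop_got w)
    (vs_echo_wait w) (vs_rcv w) (vs_fired w) (vs_outbox w) (vs_served w).
Definition vs_with_prop (w : vstate) got ew out :=
  VState (vs_sugg_sent w) (vs_timer w) (vs_sugg_from w) (vs_key2_proofs w) (vs_suggestions w)
    (vs_pending w) (vs_proposed w) (vs_proof_from w) (vs_proofs w) got
    ew (vs_rcv w) (vs_fired w) out (vs_served w).
Definition vs_with_rcv (w : vstate) r :=
  VState (vs_sugg_sent w) (vs_timer w) (vs_sugg_from w) (vs_key2_proofs w) (vs_suggestions w)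
    (vs_pending w) (vs_proposed w) (vs_proof_from w) (vs_proofs w) (vs_prop_got w)
    (vs_echo_wait w) r (vs_fired w) (vs_outbox w) (vs_served w).
Definition vs_with_fired (w : vstate) fr out :=
  VState (vs_sugg_sent w) (vs_timer w) (vs_sugg_from w) (vs_key2_proofs w) (vs_suggestions w)
    (vs_pending w) (vs_proposed w) (vs_proof_from w) (vs_proofs w) (vs_prop_got w)
    (vs_echo_wait w) (vs_rcv w) fr out (vs_served w).
Definition vs_with_served (w : vstate) sv :=
  VState (vs_sugg_sent w) (vs_timer w) (vs_sugg_from w) (vs_key2_proofs w) (vs_suggestions w)
    (vs_pending w) (vs_proposed w) (vs_proof_from w) (vs_proofs w) (vs_prop_got w)
    (vs_echo_wait w) (vs_rcv w) (vs_fired w) (vs_outbox w) sv.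

Definition set_vs (s : pstate) w :=
  PState (ks s) (view s) (hreq s) (habort s) (done_sent s) (rcv_done s) (decided s) w.
Definition set_hreq (s : pstate) h :=
  PState (ks s) (view s) h (habort s) (done_sent s) (rcv_done s) (decided s) (vs s).
Definition set_habort (s : pstate) h :=
  PState (ks s) (view s) (hreq s) h (done_sent s) (rcv_done s) (decided s) (vs s).
Definition set_rcv_done (s : pstate) r :=
  PState (ks s) (view s) (hreq s) (habort s) (done_sent s) r (decided s) (vs s).
Definition set_done_sent (s : pstate) b :=
  PState (ks s) (view s) (hreq s) (habort s) b (rcv_done s) (decided s) (vs s).
Definition set_decided (s : pstate) d :=
  PState (ks s) (view s) (hreq s) (habort s) (done_sent s) (rcv_done s) d (vs s).
Definition set_ks (s : pstate) k :=
  PState k (view s) (hreq s) (habort s) (done_sent s) (rcv_done s) (decided s) (vs s).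

Definition upd_fun (g : 'I_n -> nat) (j : 'I_n) (a : nat) : 'I_n -> nat :=
  fun k => if k == j then a else g k.

Definition to_all (i : 'I_n) (m : msg) : seq packet :=
  [seq (i, j, m) | j <- enum 'I_n].

(* primary of view v: party (v mod n)+1 in 1-indexed numbering, i.e. v %% n here *)
Definition is_primary (j : 'I_n) (v : nat) : bool := (j : nat) == v %% n.

Definition kth_largest (k : nat) (h : 'I_n -> nat) : nat :=
  nth 0 (sort geq [seq h j | j <- enum 'I_n]) k.-1.

(* phases: 0 = echo, 1 = key1, 2 = key2, 3 = key3, 4 = lock *)
Definition phase_of (m : msg) : option (nat * V * nat) :=
  match m with
  | MEcho val v => Some (0, val, v)
  | MKey1 val v => Some (1, val, v)
  | MKey2 val v => Some (2, val, v)
  | MKey3 val v => Some (3, val, v)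
  | MLock val v => Some (4, val, v)
  | _ => None
  end.

Definition phase_msg (t : nat) (val : V) (v : nat) : msg :=
  match t with
  | 0 => MEcho val v
  | 1 => MKey1 val v
  | 2 => MKey2 val v
  | 3 => MKey3 val v
  | _ => MLock val v
  end.

Definition is_phase (t : nat) (val : V) (v : nat) (m : msg) : bool :=
  phase_of m == Some (t, val, v).

Definition support (P : msg -> bool) (r : seq ('I_n * msg)) : {set 'I_n} :=
  [set j : 'I_n | has (fun jm => (jm.1 == j) && P jm.2) r].

Definition done_support (val : V) (r : seq ('I_n * V)) : {set 'I_n} :=
  [set j : 'I_n | (j, val) \in r].

Definition upd_key1 (k : keys) (val : V) (v : nat) : keys :=
  if key1_val k != val then
    Keys (lock k) (lock_val k) (key3 k) (key3_val k) (key2 k) (key2_val k) (prev_key2 k)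
         v val (Posz (key1 k))
  else
    Keys (lock k) (lock_val k) (key3 k) (key3_val k) (key2 k) (key2_val k) (prev_key2 k)
         v (key1_val k) (prev_key1 k).
Definition upd_key2 (k : keys) (val : V) (v : nat) : keys :=
  if key2_val k != val then
    Keys (lock k) (lock_val k) (key3 k) (key3_val k) v val (Posz (key2 k))
         (key1 k) (key1_val k) (prev_key1 k)
  else
    Keys (lock k) (lock_val k) (key3 k) (key3_val k) v (key2_val k) (prev_key2 k)
         (key1 k) (key1_val k) (prev_key1 k).
Definition upd_key3 (k : keys) (val : V) (v : nat) : keys :=
  Keys (lock k) (lock_val k) v val (key2 k) (key2_val k) (prev_key2 k)
       (key1 k) (key1_val k) (prev_key1 k).
Definition upd_lock (k : keys) (val : V) (v : nat) : keys :=
  Keys v val (key3 k) (key3_val k) (key2 k) (key2_val k) (prev_key2 k)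
       (key1 k) (key1_val k) (prev_key1 k).

Definition upd_keys (t : nat) : keys -> V -> nat -> keys :=
  match t with
  | 0 => upd_key1
  | 1 => upd_key2
  | 2 => upd_key3
  | _ => upd_lock
  end.

(* condition on a key2-proof triple for accepting suggestion (k3,v3) *)
Definition good_k2 (k3 : nat) (v3 : V) (t : nat * V * int) : bool :=
  let '(k, w, pk) := t in ((Posz k3 <= pk)%R || ((k3 <= k) && (w == v3))).

(* condition on a proof triple for echoing a value different from the lock *)
Definition good_proof (k : keys) (t : nat * V * int) : bool :=
  let '(k1, w, pk) := t in
  ((Posz (lock k) <= pk)%R || ((lock k <= k1) && (w != lock_val k))).

(* fresh per-view state; the proof message is queued for send-upon-join *)
Definition fresh_vs (k : keys) (v : nat) : vstate :=
  VState false false [::] [::] [::] [::] false [::] [::] false None [::] [::]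
    [:: MProof (key1 k) (key1_val k) (prev_key1 k) v] [::].

Definition enter_view (i : 'I_n) (s : pstate) (v : nat) : pstate * seq packet :=
  (PState (ks s) v (hreq s) (habort s) (done_sent s) (rcv_done s) (decided s)
          (fresh_vs (ks s) v),
   to_all i (MRequest v)).

Definition init_keys (xi : V) : keys := Keys 0 xi 0 xi 0 xi (-1)%R 0 xi (-1)%R.

Definition init_pstate (xi : V) : pstate :=
  PState (init_keys xi) 0 (fun _ => 0) (fun _ => 0) false [::] None
         (fresh_vs (init_keys xi) 0).

Definition recv (i j : 'I_n) (s : pstate) (m : msg) : pstate * seq packet :=
  let v := view s in
  let k := ks s in
  let w := vs s in
  match m with
  | MRequest r =>
      (set_hreq s (upd_fun (hreq s) j (maxn (hreq s j) r)), [::])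
  | MAbort r =>
      if habort s j < r then
        let ha1 := upd_fun (habort s) j r in
        let u := kth_largest f.+1 ha1 in
        let '(ha2, out1) :=
          if ha1 i < u then (upd_fun ha1 i u, to_all i (MAbort u)) else (ha1, [::]) in
        let s1 := set_habort s ha2 in
        let wv := kth_largest (n - f) ha2 in
        if v <= wv then
          let '(s2, out2) := enter_view i s1 wv.+1 in (s2, out1 ++ out2)
        else (s1, out1)
      else (s, [::])
  | MDone val => (set_rcv_done s (rcv_done s ++ [:: (j, val)]), [::])
  | MSuggest k3 v3 k2 v2 pk2 r =>
      if [&& r == v, is_primary i v & j \notin vs_sugg_from w] then
        let kp := if (pk2 < Posz k2)%R && (k2 < v)
                  then vs_key2_proofs w ++ [:: (k2, v2, pk2)] else vs_key2_proofs w in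
        let sg := if k3 == 0 then vs_suggestions w ++ [:: (k3, v3)] else vs_suggestions w in
        let pd := if (k3 != 0) && (k3 < v) then vs_pending w ++ [:: (k3, v3)]
                  else vs_pending w in
        (set_vs s (vs_with_sugg w (j :: vs_sugg_from w) kp sg pd), [::])
      else (s, [::])
  | MProof k1 v1 pk1 r =>
      if (r == v) && (j \notin vs_proof_from w) then
        let pr := if (k1 < v) && (pk1 < Posz k1)%R
                  then vs_proofs w ++ [:: (k1, v1, pk1)] else vs_proofs w in
        (set_vs s (vs_with_proofs w (j :: vs_proof_from w) pr), [::])
      else (s, [::])
  | MPropose key val r =>
      if [&& r == v, is_primary j v & ~~ vs_prop_got w] then
        if (lock k == 0) || (val == lock_val k) then
          (set_vs s (vs_with_prop w true (vs_echo_wait w) (vs_outbox w ++ [:: MEcho val v])), [::])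
        else if (key < v) && (lock k <= key) then
          (set_vs s (vs_with_prop w true (Some val) (vs_outbox w)), [::])
        else (set_vs s (vs_with_prop w true (vs_echo_wait w) (vs_outbox w)), [::])
      else (s, [::])
  | MEcho _ r | MKey1 _ r | MKey2 _ r | MKey3 _ r | MLock _ r =>
      if r == v then (set_vs s (vs_with_rcv w (vs_rcv w ++ [:: (j, m)])), [::])
      else (s, [::])
  end.

Inductive internal (i : 'I_n) : pstate -> pstate -> seq packet -> Prop :=
| IT_timeout s :                       (* after 11Delta: send <abort,v> to all *)
    ~~ vs_timer (vs s) ->
    internal i s (set_vs s (vs_with_timer (vs s) true)) (to_all i (MAbort (view s)))
| IT_suggest s p :
    ~~ vs_sugg_sent (vs s) -> is_primary p (view s) -> hreq s p = view s ->
    internal i s (set_vs s (vs_with_sugg_sent (vs s) true))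
      [:: (i, p, MSuggest (key3 (ks s)) (key3_val (ks s)) (key2 (ks s)) (key2_val (ks s))
                          (prev_key2 (ks s)) (view s))]
| IT_join s t j :
    t < size (vs_outbox (vs s)) -> hreq s j = view s -> (j, t) \notin vs_served (vs s) ->
    internal i s (set_vs s (vs_with_served (vs s) ((j, t) :: vs_served (vs s))))
      [:: (i, j, nth (MRequest 0) (vs_outbox (vs s)) t)]
| IT_accept s s1 s2 k3 v3 :
    vs_pending (vs s) = s1 ++ (k3, v3) :: s2 ->
    f < count (good_k2 k3 v3) (vs_key2_proofs (vs s)) ->
    internal i s
      (set_vs s (vs_with_sugg (vs s) (vs_sugg_from (vs s)) (vs_key2_proofs (vs s))
                   (vs_suggestions (vs s) ++ [:: (k3, v3)]) (s1 ++ s2))) [::]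
| IT_propose s key val :
    is_primary i (view s) -> ~~ vs_proposed (vs s) ->
    n - f <= size (vs_suggestions (vs s)) ->
    (key, val) \in vs_suggestions (vs s) ->
    all (fun kw => kw.1 <= key) (vs_suggestions (vs s)) ->
    internal i s (set_vs s (vs_with_proposed (vs s) true
                   (vs_outbox (vs s) ++ [:: MPropose key val (view s)]))) [::]
| IT_echo s val :
    vs_echo_wait (vs s) = Some val ->
    f < count (good_proof (ks s)) (vs_proofs (vs s)) ->
    internal i s (set_vs s (vs_with_prop (vs s) (vs_prop_got (vs s)) None
                   (vs_outbox (vs s) ++ [:: MEcho val (view s)]))) [::]
| IT_quorum s t val :
    t < 4 -> (t, val) \notin vs_fired (vs s) ->
    n - f <= #|support (is_phase t val (view s)) (vs_rcv (vs s))| ->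
    internal i s
      (PState (upd_keys t (ks s) val (view s)) (view s) (hreq s) (habort s) (done_sent s)
              (rcv_done s) (decided s)
              (vs_with_fired (vs s) (vs_fired (vs s) ++ [:: (t, val)])
                 (vs_outbox (vs s) ++ [:: phase_msg t.+1 val (view s)]))) [::]
| IT_lockdone s val :
    (4, val) \notin vs_fired (vs s) ->
    n - f <= #|support (is_phase 4 val (view s)) (vs_rcv (vs s))| ->
    internal i s
      (set_done_sent (set_vs s (vs_with_fired (vs s) (vs_fired (vs s) ++ [:: (4, val)])
                                 (vs_outbox (vs s)))) true)
      (if done_sent s then [::] else to_all i (MDone val))
| IT_amplify s val :
    ~~ done_sent s -> f < #|done_support val (rcv_done s)| ->
    internal i s (set_done_sent s true) (to_all i (MDone val))
| IT_decide s val :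
    n - f <= #|done_support val (rcv_done s)| ->
    internal i s (set_decided s (Some val)) [::].

Record config := Config {
  cst : 'I_n -> pstate;       (* local states (meaningful for nonfaulty parties) *)
  cnet : seq packet;
  chist : seq packet }.       (* every message ever sent *)

Definition upd_st (st : 'I_n -> pstate) (i : 'I_n) (s : pstate) : 'I_n -> pstate :=
  fun k => if k == i then s else st k.

Inductive step (F : {set 'I_n}) : config -> config -> Prop :=
| St_deliver st s1 s2 h src dst m s' out :
    dst \notin F -> decided (st dst) = None ->
    recv dst src (st dst) m = (s', out) ->
    step F (Config st (s1 ++ (src, dst, m) :: s2) h)
           (Config (upd_st st dst s') (s1 ++ s2 ++ out) (h ++ out))
| St_internal st net h i s' out :
    i \notin F -> decided (st i) = None ->
    internal i (st i) s' out ->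
    step F (Config st net h) (Config (upd_st st i s') (net ++ out) (h ++ out))
| St_byz st net h j k m :
    j \in F ->
    step F (Config st net h) (Config st (net ++ [:: (j, k, m)]) (h ++ [:: (j, k, m)])).

Definition init_config (x : 'I_n -> V) (F : {set 'I_n}) : config :=
  let out := flatten [seq to_all i (MRequest 0) | i <- enum (~: F)] in
  Config (fun i => init_pstate (x i)) out out.

Inductive reachable (x : 'I_n -> V) (F : {set 'I_n}) : config -> Prop :=
| R_init : reachable x F (init_config x F)
| R_step c c' : reachable x F c -> step F c c' -> reachable x F c'.

End ITHS.

From Pilot Require Import Defs.
From mathcomp Require Import all_boot all_order all_algebra.
From Stdlib Require List.
From mathcomp Require Import zify.

Set Implicit Arguments.
Unset Strict Implicit.
Unset Printing Implicit Defensive.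

(* A nonfaulty party sends <key1,val,v> only after collecting <echo,val,v>
   from n - f parties.  Two such quorums share at least n - 2f > f parties,
   hence a nonfaulty one, and a nonfaulty party echoes at most one value per
   view: it echoes only the value fixed by the first proposal it processes in
   the view, and that per-view state is discarded for good once it moves to a
   later view.  Both facts are kept as an invariant of reachable
   configurations relating the messages a party has sent to its current view
   and outbox. *)

Lemma quorums_share_honest (n f : nat) (F S T : {set 'I_n}) :
  3 * f < n -> #|F| <= f -> n - f <= #|S| -> n - f <= #|T| ->
  exists2 k, k \in S :&: T & k \notin F.
Proof.
move=> lt_3f_n leF leS leT.
have : 0 < #|(S :&: T) :\: F|.
  have := cardsUI S T; have := max_card (S :|: T); rewrite card_ord.
  have := cardsID F (S :&: T); have := subset_leq_card (subsetIr (S :&: T) F).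
  lia.
by case/card_gt0P => k; rewrite in_setD => /andP [kF kST]; exists k.
Qed.

Lemma In_cat T (x : T) (s1 s2 : seq T) :
  List.In x (s1 ++ s2) <-> List.In x s1 \/ List.In x s2.
Proof. by elim: s1 => [|y s IH] /=; tauto. Qed.

Lemma In_nth T (x0 : T) (s : seq T) t : t < size s -> List.In (nth x0 s t) s.
Proof. by elim: s t => [|y s IH] [|t] //= lt_t; [left | right; apply: IH]. Qed.

Lemma has_In T (p : pred T) (s : seq T) : has p s -> exists2 x, List.In x s & p x.
Proof.
elim: s => [|y s IH] //= /orP [py | /IH [x sx px]]; first by exists y; [left|].
by exists x; [right|].
Qed.

Section Invariant.
Variables (n f : nat) (V : eqType).

Lemma In_to_all (i : 'I_n) (m : msg V) p :
  List.In p (to_all i m) -> exists j, p = (i, j, m).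
Proof.
by rewrite /to_all; elim: (enum 'I_n) => //= j js IH [<- | /IH]; [exists j|].
Qed.

Definition echo_or_key1 (m : msg V) : bool :=
  match m with MEcho _ _ | MKey1 _ _ => true | _ => false end.

Definition echo_quorum (h : seq (packet n V)) (val : V) (v : nat) : Prop :=
  exists2 S : {set 'I_n}, n - f <= #|S| &
    forall k, k \in S -> exists d, List.In (k, d, MEcho val v) h.

Lemma echo_quorum_catr h o val v : echo_quorum h val v -> echo_quorum (h ++ o) val v.
Proof.
by case=> S leS echoS; exists S => // k /echoS [d hd]; exists d; apply/In_cat; left.
Qed.

(* A pending conditional echo already binds the party to its value. *)
Definition committed (s : pstate n V) (a : V) : Prop :=
  List.In (MEcho a (view s)) (vs_outbox (vs s)) \/ vs_echo_wait (vs s) = Some a.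

Definition sendable (s : pstate n V) (m : msg V) : Prop :=
  echo_or_key1 m -> List.In m (vs_outbox (vs s)).

Record party_inv (i : 'I_n) (s : pstate n V) (h : seq (packet n V)) : Prop := {
  inv_rcv : forall j m, List.In (j, m) (vs_rcv (vs s)) -> List.In (j, i, m) h;
  inv_outbox_key1 : forall a v, List.In (MKey1 a v) (vs_outbox (vs s)) -> echo_quorum h a v;
  inv_outbox_echo : forall a v, List.In (MEcho a v) (vs_outbox (vs s)) -> v = view s;
  inv_committed_uniq : forall a b, committed s a -> committed s b -> a = b;
  inv_committed_got : forall a, committed s a -> vs_prop_got (vs s);
  inv_sent_echo : forall j a v, List.In (i, j, MEcho a v) h ->
    v < view s \/ List.In (MEcho a v) (vs_outbox (vs s));
  inv_sent_echo_uniq : forall j j' a b v,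
    List.In (i, j, MEcho a v) h -> List.In (i, j', MEcho b v) h -> a = b;
  inv_sent_key1 : forall j a v, List.In (i, j, MKey1 a v) h -> echo_quorum h a v }.

Section Party.
Variable i : 'I_n.

Lemma party_inv_catr s h o :
  party_inv i s h -> (forall p, List.In p o -> p.1.1 = i -> sendable s p.2) ->
  party_inv i s (h ++ o).
Proof.
move=> [Hrcv Hkey Hview Huniq Hgot Hsent Hsuniq Hskey] Ho.
have new_echo j a v : List.In (i, j, MEcho a v) o -> List.In (MEcho a v) (vs_outbox (vs s)).
  by move=> /Ho; apply.
have now_committed j a : List.In (i, j, MEcho a (view s)) (h ++ o) -> committed s a.
  by move=> /In_cat [/Hsent [|]|/new_echo]; [rewrite ltnn | left | left].
split=> //.
- by move=> j m /Hrcv hm; apply/In_cat; left.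
- by move=> a v /Hkey /echo_quorum_catr.
- by move=> j a v /In_cat [/Hsent | /new_echo]; [|right].
- move=> j j' a b v ha hb; have [ev | ne_v] := eqVneq v (view s).
    by rewrite ev in ha hb; exact: Huniq (now_committed _ _ ha) (now_committed _ _ hb).
  have old d c : List.In (i, d, MEcho c v) (h ++ o) -> List.In (i, d, MEcho c v) h.
    by move=> /In_cat [// | /new_echo /Hview ev]; rewrite ev eqxx in ne_v.
  exact: Hsuniq (old _ _ ha) (old _ _ hb).
- move=> j a v /In_cat [/Hskey | /Ho hs]; first exact: echo_quorum_catr.
  by apply/echo_quorum_catr/Hkey/hs.
Qed.

Lemma party_inv_frame s s' h :
  party_inv i s h ->
  view s' = view s -> vs_rcv (vs s') = vs_rcv (vs s) ->
  vs_outbox (vs s') = vs_outbox (vs s) -> vs_echo_wait (vs s') = vs_echo_wait (vs s) ->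
  (vs_prop_got (vs s) -> vs_prop_got (vs s')) ->
  party_inv i s' h.
Proof.
move=> [Hrcv Hkey Hview Huniq Hgot Hsent Hsuniq Hskey] Ev Er Eo Ew Eg.
have Ec a : committed s' a -> committed s a by rewrite /committed Ev Eo Ew.
split; rewrite ?Ev ?Er ?Eo //.
- by move=> a b /Ec ha /Ec hb; apply: Huniq.
- by move=> a /Ec /Hgot /Eg.
Qed.

Lemma party_inv_record s s' h j m :
  party_inv i s h -> List.In (j, i, m) h ->
  view s' = view s -> vs_rcv (vs s') = vs_rcv (vs s) ++ [:: (j, m)] ->
  vs_outbox (vs s') = vs_outbox (vs s) -> vs_echo_wait (vs s') = vs_echo_wait (vs s) ->
  vs_prop_got (vs s') = vs_prop_got (vs s) ->
  party_inv i s' h.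
Proof.
move=> [Hrcv Hkey Hview Huniq Hgot Hsent Hsuniq Hskey] hm Ev Er Eo Ew Eg.
have Ec a : committed s' a -> committed s a by rewrite /committed Ev Eo Ew.
split; rewrite ?Ev ?Eo ?Eg //.
- by move=> j' m'; rewrite Er => /In_cat [/Hrcv | [[<- <-] | []]].
- by move=> a b /Ec ha /Ec hb; apply: Huniq.
- by move=> a /Ec /Hgot.
Qed.

Lemma party_inv_push s s' h M :
  party_inv i s h ->
  view s' = view s -> vs_rcv (vs s') = vs_rcv (vs s) ->
  vs_outbox (vs s') = vs_outbox (vs s) ++ [:: M] ->
  (forall a, vs_echo_wait (vs s') = Some a -> vs_echo_wait (vs s) = Some a) ->
  vs_prop_got (vs s') = vs_prop_got (vs s) ->
  (forall a v, M = MEcho a v -> v = view s /\ vs_echo_wait (vs s) = Some a) ->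
  (forall a v, M = MKey1 a v -> echo_quorum h a v) ->
  party_inv i s' h.
Proof.
move=> [Hrcv Hkey Hview Huniq Hgot Hsent Hsuniq Hskey] Ev Er Eo Ew Eg echoM key1M.
have Ec a : committed s' a -> committed s a.
  rewrite /committed Eo Ev => -[/In_cat [|[/echoM [_ ->] | []]] | /Ew]; by [left | right].
split; rewrite ?Ev ?Er ?Eg ?Eo //.
- by move=> a v /In_cat [/Hkey | [/key1M | []]].
- by move=> a v /In_cat [/Hview | [/echoM [] | []]].
- by move=> a b /Ec ha /Ec hb; apply: Huniq.
- by move=> a /Ec /Hgot.
- by move=> j a v /Hsent [|ha]; [left | right; apply/In_cat; left].
Qed.

Lemma party_inv_first_propose s s' h a :
  party_inv i s h -> ~~ vs_prop_got (vs s) -> vs_prop_got (vs s') ->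
  view s' = view s -> vs_rcv (vs s') = vs_rcv (vs s) ->
  (vs_outbox (vs s') = vs_outbox (vs s) ++ [:: MEcho a (view s)] /\
     vs_echo_wait (vs s') = vs_echo_wait (vs s)) \/
  (vs_outbox (vs s') = vs_outbox (vs s) /\ vs_echo_wait (vs s') = Some a) ->
  party_inv i s' h.
Proof.
move=> [Hrcv Hkey Hview Huniq Hgot Hsent Hsuniq Hskey] not_got got' Ev Er Eow.
have no_echo b v : ~ List.In (MEcho b v) (vs_outbox (vs s)).
  by move=> hb; move: not_got; rewrite (Hgot b) //; left; rewrite -(Hview _ _ hb).
have no_wait : vs_echo_wait (vs s) = None.
  by case ew: (vs_echo_wait _) => [b|] //; move: not_got; rewrite (Hgot b) //; right.
have echo' b v : List.In (MEcho b v) (vs_outbox (vs s')) -> b = a /\ v = view s.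
  by case: Eow => -[-> _] => [/In_cat [/no_echo | [[-> ->] | []]] | /no_echo].
have Ec b : committed s' b -> b = a.
  rewrite /committed; case: Eow => -[_ ->]; rewrite ?no_wait.
    by case=> [/echo' [] | ].
  by case=> [/echo' [] | [->]].
have sub_outbox m : List.In m (vs_outbox (vs s)) -> List.In m (vs_outbox (vs s')).
  by case: Eow => -[-> _] // hm; apply/In_cat; left.
split; rewrite ?Ev ?Er //.
- by case: Eow => -[-> _] => [b v /In_cat [/Hkey | [[] | []]] | ].
- by move=> b v /echo' [].
- by move=> b c /Ec -> /Ec ->.
- by move=> j b v /Hsent [|/sub_outbox]; [left | right].
Qed.

Lemma party_inv_enter_view s h k k' v' hr ha ds rd dc :
  party_inv i s h -> view s < v' ->
  party_inv i (PState k v' hr ha ds rd dc (fresh_vs n k' v')) h.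
Proof.
move=> [Hrcv Hkey Hview Huniq Hgot Hsent Hsuniq Hskey] lt_v; split=> //=.
- by move=> a v [].
- by move=> a v [].
- by move=> a b [[]|].
- by move=> a [[]|].
- by move=> j a v /Hsent [|/Hview ->]; left; lia.
Qed.

Lemma echo_quorum_of_support s h val v :
  party_inv i s h ->
  n - f <= #|Defs.support (is_phase 0 val v) (vs_rcv (vs s))| -> echo_quorum h val v.
Proof.
move=> HP le_q; exists (Defs.support (is_phase 0 val v) (vs_rcv (vs s))) => // k.
rewrite inE => /has_In [[j m] hm /andP [/eqP /= <-]].
by case: m hm => //= a r hm /eqP [<- <-]; exists i; apply: (inv_rcv HP hm).
Qed.

Lemma recv_sends src s m p :
  List.In p (recv f i src s m).2 -> p.1.1 = i /\ ~~ echo_or_key1 p.2.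
Proof.
rewrite /recv.
case: m => [r|r|a|k3 v3 k2 v2 pk2 r|k1 v1 pk1 r|key a r|a r|a r|a r|a r|a r] /=;
  try by repeat case: ifP => _ //=.
case: ifP => // _; do 2 case: ifP => _ /=; rewrite ?cats0 //; try move=> /In_cat [];
  by move=> /In_to_all [j ->].
Qed.

Lemma party_inv_recv src s h m :
  party_inv i s h -> List.In (src, i, m) h -> party_inv i (recv f i src s m).1 h.
Proof.
move=> HP hm; rewrite /recv.
case: m hm => [r|r|a|k3 v3 k2 v2 pk2 r|k1 v1 pk1 r|key a r|a r|a r|a r|a r|a r] hm /=.
- by apply: (party_inv_frame HP).
- case: ifP => // _; case: ifP => _ /=; case: ifP => le_v /=;
    by [apply: (party_inv_frame HP) | apply: party_inv_enter_view HP _; lia].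
- by apply: (party_inv_frame HP).
- by case: ifP => // _; apply: (party_inv_frame HP).
- by case: ifP => // _; apply: (party_inv_frame HP).
- case: ifP => // /and3P [_ _ not_got].
  case: ifP => _; first by apply: (party_inv_first_propose (a := a) HP) => //; left.
  case: ifP => _; first by apply: (party_inv_first_propose (a := a) HP) => //; right.
  by apply: (party_inv_frame HP).
all: by case: ifP => // _; apply: (party_inv_record HP hm).
Qed.

Lemma internal_sends s s' out p :
  internal f i s s' out -> List.In p out -> p.1.1 = i /\ sendable s' p.2.
Proof.
case=> {s' out} /= [s0 _ | s0 q _ _ _ | s0 t j lt_t _ _ | * | * | * | * | s0 val _ _
                   | s0 val _ _ | *] //=.
- by move=> /In_to_all [j ->].
- by case=> [<- | []].
- by case=> [<- | []]; split=> // _; apply: In_nth.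
- by case: ifP => _ // /In_to_all [j ->].
- by move=> /In_to_all [j ->].
Qed.

Lemma party_inv_internal s s' h out :
  party_inv i s h -> internal f i s s' out -> party_inv i s' h.
Proof.
move=> HP step; case: step HP => {s' out} [s0 _ | s0 q _ _ _ | s0 t j _ _ _
  | s0 s1 s2 k3 v3 _ _ | s0 key val _ _ _ _ _ | s0 val ew _ | s0 t val lt_t _ q
  | s0 val _ _ | s0 val _ _ | s0 val _] HP;
  try by apply: (party_inv_frame HP).
- by apply: (party_inv_push HP) => // a v.
- by apply: (party_inv_push HP) => // a v [<- <-].
- apply: (party_inv_push HP) => //; case: t lt_t q => [|[|[|[|]]]] // _ q a v [<- <-].
  exact: echo_quorum_of_support HP q.
Qed.

End Party.

Section Reachable.
Variable F : {set 'I_n}.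

Record config_inv (c : config n V) : Prop := {
  inv_parties : forall i, i \notin F -> party_inv i (cst c i) (chist c);
  inv_net : forall p, List.In p (cnet c) -> List.In p (chist c) }.

Lemma party_inv_upd_st st h i s' out :
  (forall k, k \notin F -> party_inv k (st k) h) -> party_inv i s' h ->
  (forall p, List.In p out -> p.1.1 = i /\ sendable s' p.2) ->
  forall k, k \notin F -> party_inv k (upd_st st i s' k) (h ++ out).
Proof.
move=> Hst HP Hout k kF; rewrite /upd_st; case: eqP => [-> | ne_ki].
  by apply: (party_inv_catr HP) => p /Hout [].
by apply: (party_inv_catr (Hst k kF)) => p /Hout [-> _] /esym /ne_ki.
Qed.

Lemma config_inv_init x : config_inv (init_config x F).
Proof.
have init_req p : List.In p (chist (init_config x F)) -> p.2 = MRequest V 0.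
  by rewrite /=; elim: (enum (~: F)) => //= j js IH /In_cat [/In_to_all [d ->] | /IH].
split=> // i _; split=> //=.
- by move=> a v [].
- by move=> a v [].
- by move=> a b [[]|].
- by move=> a [[]|].
- by move=> j a v /init_req.
- by move=> j j' a b v /init_req.
- by move=> j a v /init_req.
Qed.

Lemma config_inv_step c c' : config_inv c -> step f F c c' -> config_inv c'.
Proof.
move=> inv_c step_c; case: step_c inv_c => {c c'}.
- move=> st s1 s2 h src dst m s' out dstF _ recv_m [/= Hst Hnet].
  have hm : List.In (src, dst, m) h by apply/Hnet/In_cat; right; left.
  split=> /=.
    apply: (party_inv_upd_st Hst).
      by have := party_inv_recv (Hst _ dstF) hm; rewrite recv_m.
    move=> p hp; have [-> /negbTE untracked] : p.1.1 = dst /\ ~~ echo_or_key1 p.2.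
      by apply: (recv_sends (src := src) (s := st dst) (m := m)); rewrite recv_m.
    by split=> //; rewrite /sendable untracked.
  move=> p /In_cat [hp | /In_cat [hp | hp]]; apply/In_cat; try by right.
    by left; apply/Hnet/In_cat; left.
  by left; apply/Hnet/In_cat; right; right.
- move=> st net h i s' out iF _ step_i [/= Hst Hnet]; split=> /=.
    apply: (party_inv_upd_st Hst (party_inv_internal (Hst _ iF) step_i)).
    by move=> p; apply: internal_sends step_i.
  by move=> p /In_cat [/Hnet hp | hp]; apply/In_cat; [left | right].
- move=> st net h j k m jF [/= Hst Hnet]; split=> /=.
    move=> i iF; apply: (party_inv_catr (Hst _ iF)) => p [<- | []] /= eq_ji.
    by move: iF; rewrite -eq_ji jF.
  by move=> p /In_cat [/Hnet hp | hp]; apply/In_cat; [left | right].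
Qed.

Lemma config_inv_reachable x c : reachable f x F c -> config_inv c.
Proof.
elim=> [|c0 c1 _ inv_c0 /(config_inv_step inv_c0) //].
exact: config_inv_init.
Qed.

End Reachable.
End Invariant.

Theorem lemma2p3 (n f : nat) (V : eqType) (x : 'I_n -> V) (F : {set 'I_n})
  (c : config n V) :
  3 * f < n -> #|F| <= f -> reachable f x F c ->
  forall (i i' j j' : 'I_n) (val val' : V) (v : nat),
    i \notin F -> i' \notin F ->
    List.In (i, j, MKey1 val v) (chist c) ->
    List.In (i', j', MKey1 val' v) (chist c) ->
    val = val'.
Proof.
move=> lt_3f_n leF reach_c i i' j j' val val' v iF i'F key1 key1'.
have [Hparties _] := config_inv_reachable reach_c.
have [S leS echoS] := inv_sent_key1 (Hparties _ iF) key1.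
have [T leT echoT] := inv_sent_key1 (Hparties _ i'F) key1'.
have [k /setIP [/echoS [d echo] /echoT [d' echo']] kF] :=
  quorums_share_honest lt_3f_n leF leS leT.
exact: (inv_sent_echo_uniq (Hparties _ kF) echo echo').
Qed.
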